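(* Let $\alpha\ge0$ and $n>\alpha$. Let $B_r$ be the event that $\mathscr{G}(n,\alpha/n)$ has no connected component with more than $r$ vertices and let $L$ be the event that all connected components of $\mathscr{G}(n,\alpha/n)$ are trees. Then for all $r\ge1$, \[ P_{n,\alpha}(B_r)\le P_{n,\alpha}(L)\Bigl(1-\frac{\alpha}{n}\Bigr)^{-\frac12 rn}. \]
   Context: $\mathscr{G}(n,p)$ is the random graph on vertex set $\{1,\dots,n\}$ in which each of the $\binom n2$ unordered pairs is an edge independently with probability $p$; here $p=\alpha/n$, and $P_{n,\alpha}$ is the corresponding probability measure. *)

From HB Require Import structures.
From mathcomp Require Import all_boot all_order all_algebra.
From mathcomp Require Import boolp reals exp.
Set Implicit Arguments. Unset Strict Implicit. Unset Printing Implicit Defensive.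
Import Order.TTheory GRing.Theory Num.Theory.
Local Open Scope ring_scope.

(* A simple graph on vertex set 'I_n (= {1..n} shifted) is a set of
   unordered pairs, i.e. a subset of [pairs n]. *)
Definition pairs (n : nat) : {set {set 'I_n}} := [set e : {set 'I_n} | #|e| == 2%N].

Definition is_graph (n : nat) (E : {set {set 'I_n}}) : bool := E \subset pairs n.

Definition adj (n : nat) (E : {set {set 'I_n}}) : rel 'I_n :=
  fun x y => [set x; y] \in E.

Definition component (n : nat) (E : {set {set 'I_n}}) (v : 'I_n) : {set 'I_n} :=
  [set w | connect (adj E) v w].

Definition graph_cycle (n : nat) (E : {set {set 'I_n}}) (s : seq 'I_n) : bool :=
  [&& uniq s, (3 <= size s)%N & cycle (adj E) s].

(* the component of v is a tree: it is connected (by construction) and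
   contains no cycle *)
Definition component_is_tree (n : nat) (E : {set {set 'I_n}}) (v : 'I_n) : Prop :=
  forall s : seq 'I_n, all (fun w => w \in component E v) s -> ~~ graph_cycle E s.

Definition event_B (n r : nat) (E : {set {set 'I_n}}) : Prop :=
  forall v : 'I_n, (#|component E v| <= r)%N.

Definition event_L (n : nat) (E : {set {set 'I_n}}) : Prop :=
  forall v : 'I_n, component_is_tree E v.

Definition Pgnp {R : realFieldType} (n : nat) (p : R)
  (A : {set {set 'I_n}} -> Prop) : R :=
  \sum_(E : {set {set 'I_n}} | is_graph E && `[< A E >])
     p ^+ #|E| * (1 - p) ^+ (#|pairs n| - #|E|).
Arguments Pgnp {R} n p A.

From HB Require Import structures.
From mathcomp Require Import all_boot all_order all_algebra.
From mathcomp Require Import boolp reals exp.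
From mathcomp Require Import zify.
Import Order.TTheory GRing.Theory Num.Theory.
Set Implicit Arguments. Unset Strict Implicit. Unset Printing Implicit Defensive.

(* Send every graph E to a spanning forest F of E, an edge-minimal subgraph with the same
   components: F is acyclic because removing an edge of a cycle does not change the components.
   E lies between F and the set U of all pairs inside components of F, and summing the weight
   p^|E| q^(N - |E|), q = 1 - p, over that interval gives p^|F| q^(N - |U|), the weight of F times
   q^-|U :\: F|. If no component has more than r vertices, then |U| <= rn/2, and summing over the
   forests F yields the bound. *)

Section Graphs.
Variable n : nat.
Implicit Types E F : {set {set 'I_n}}.

Lemma adj_sym E : symmetric (adj E).
Proof. by move=> x y; rewrite /adj setUC. Qed.

Lemma adj_setD1 E e a b : adj E a b -> [set a; b] != e -> adj (E :\ e) a b.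
Proof. by rewrite /adj !inE => -> ->. Qed.

Lemma connect_adj_subset F E :
  F \subset E -> subrel (connect (adj F)) (connect (adj E)).
Proof. by move=> FE; apply: connect_sub => a b ab; apply/connect1/(subsetP FE). Qed.

Definition same_components F E := [forall v, component F v == component E v].

Lemma same_componentsP F E :
  reflect (component F =1 component E) (same_components F E).
Proof. by apply: (iffP forallP) => h v; apply/eqP. Qed.

Lemma same_components_trans F G E :
  same_components F G -> same_components G E -> same_components F E.
Proof.
move=> /same_componentsP h1 /same_componentsP h2.
by apply/same_componentsP => v; rewrite h1.
Qed.

Lemma same_components_subset F E : F \subset E ->
  (forall a b, adj E a b -> connect (adj F) a b) -> same_components F E.
Proof.
move=> FE hE; apply/same_componentsP => x; apply/setP => y; rewrite !inE.
by apply/idP/idP; [apply: connect_adj_subset | apply: connect_sub].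
Qed.

Lemma connect_cycle_detour E s0 s1 t0 t : graph_cycle E [:: s0, s1, t0 & t] ->
  connect (adj (E :\ [set s0; s1])) s1 s0.
Proof.
case/and3P => /= + _ /and3P[_ e1t pt].
rewrite !inE !negb_or => /and4P[/and3P[ne01 ne0t0 _] /andP[ne1t0 s1t] _ _].
have avoid c a b :
    c \in [set s0; s1] -> a != c -> b != c -> [set a; b] != [set s0; s1].
  move=> ce na nb; apply/eqP => eab; move: ce.
  by rewrite -eab !inE ![c == _]eq_sym (negbTE na) (negbTE nb).
apply/connectP; exists (t0 :: rcons t s0); last by rewrite /= last_rcons.
rewrite /= adj_setD1 ?(avoid s0) ?set21 1?eq_sym //=.
apply: (sub_in_path (P := predC1 s1)) pt => [a b /= na nb ab|].
  by rewrite adj_setD1 ?(avoid s1) ?set22.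
rewrite /= all_rcons /= eq_sym ne1t0 ne01 /=.
by apply/allP => x xt; apply: contraNneq s1t => <-.
Qed.

Lemma graph_cycle_redundant_edge E s :
  graph_cycle E s -> exists2 e, e \in E & same_components (E :\ e) E.
Proof.
case: s => [|s0 [|s1 [|t0 t]]] cyc; try by case/and3P: cyc.
exists [set s0; s1]; first by case/and3P: cyc => _ _ /andP[].
apply: same_components_subset (subD1set _ _) _ => a b ab.
have [eab | neab] := eqVneq [set a; b] [set s0; s1]; last exact/connect1/adj_setD1.
have [-> | nab] := eqVneq a b; first exact: connect0.
have detour := connect_cycle_detour cyc.
have : (a \in [set s0; s1]) && (b \in [set s0; s1]) by rewrite -eab !inE !eqxx orbT.
rewrite !inE => /andP[/orP[]/eqP-> /orP[]/eqP->]; rewrite ?eqxx // in nab *.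
by rewrite (sym_connect_sym (adj_sym _)).
Qed.

Definition spanning_forest E :=
  arg_min E (fun F => (F \subset E) && same_components F E) (fun F => #|F|).

Lemma spanning_forestP E :
  [/\ spanning_forest E \subset E, same_components (spanning_forest E) E &
      forall F, F \subset E -> same_components F E -> (#|spanning_forest E| <= #|F|)%N].
Proof.
rewrite /spanning_forest; case: arg_minnP => [|F /andP[FE sFE] minF].
  by rewrite subxx; apply/same_componentsP.
by split=> // G GE sGE; apply: minF; rewrite GE.
Qed.

Lemma spanning_forest_acyclic E : event_L (spanning_forest E).
Proof.
have [FE sFE minF] := spanning_forestP E.
move=> v s _; apply/negP => /graph_cycle_redundant_edge [e eF sFeF].
have := minF _ (subset_trans (subD1set _ e) FE) (same_components_trans sFeF sFE).
by rewrite (cardsD1 e) eF ltnn.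
Qed.

Lemma component_spanning_forest E : component (spanning_forest E) =1 component E.
Proof. by have [_ /same_componentsP] := spanning_forestP E. Qed.

Lemma is_graph_spanning_forest E : is_graph E -> is_graph (spanning_forest E).
Proof. by have [FE _ _] := spanning_forestP E; apply: subset_trans. Qed.

Definition component_pairs F : {set {set 'I_n}} :=
  [set e in pairs n | [forall x in e, e \subset component F x]].

Lemma component_pairs_sub F : component_pairs F \subset pairs n.
Proof. by apply/subsetP => e; rewrite inE => /andP[]. Qed.

Lemma graph_sub_component_pairs E : is_graph E -> E \subset component_pairs E.
Proof.
move=> gE; apply/subsetP => e eE; have ep := subsetP gE _ eE.
rewrite inE ep; move: ep eE; rewrite inE => /cards2P[a [b [_ ->]]] ab.
apply/forall_inP => x xe; apply/subsetP => y ye; rewrite inE.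
have ba : adj E b a by rewrite adj_sym.
by move: xe ye; rewrite !inE => /orP[]/eqP-> /orP[]/eqP->; rewrite ?connect0 ?connect1.
Qed.

Lemma component_pairs_same F E :
  same_components F E -> component_pairs F = component_pairs E.
Proof.
move/same_componentsP => h; apply/setP => e.
by rewrite !inE; under eq_forallb do rewrite h.
Qed.

Lemma card_component_pairs r F :
  event_B r F -> (#|component_pairs F| * 2 <= n * r)%N.
Proof.
move=> hB.
have -> : (#|component_pairs F| * 2 = \sum_(e in component_pairs F) \sum_(x in e) 1)%N.
  rewrite -sum_nat_const; apply: eq_bigr => e /(subsetP (component_pairs_sub F)).
  by rewrite inE sum1_card => /eqP.
have -> : (n * r = \sum_(x : 'I_n) r)%N by rewrite sum_nat_const card_ord.
rewrite (exchange_big_dep predT) //=; apply: leq_sum => x _.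
rewrite sum1dep_card; apply: leq_trans (hB x).
apply: leq_trans (leq_imset_card (fun y => [set x; y]) _); apply: subset_leq_card.
apply/subsetP => e; rewrite !inE => /andP[/andP[/cards2P[a [b [_ ->]]]]].
move=> /forall_inP eC xe; apply/imsetP.
move: xe (eC _ xe) => /set2P[]-> /subsetP sub.
  by exists b; rewrite ?sub ?set22.
by exists a; rewrite ?sub ?set21 // setUC.
Qed.

End Graphs.

Local Open Scope ring_scope.

Lemma sum_subsets (R : comNzRingType) (T : finType) (p q : R) (D : {set T}) :
  \sum_(X : {set T} | X \subset D) p ^+ #|X| * q ^+ #|D :\: X| = (p + q) ^+ #|D|.
Proof.
have -> : (p + q) ^+ #|D| =
    \prod_i ((if i \in D then p else 0) + (if i \in D then q else 1)).
  by rewrite -prodr_const [LHS]big_mkcond; apply: eq_bigr => i _; case: ifP; rewrite ?add0r.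
rewrite bigA_distr [RHS](bigID (fun X : {set T} => X \subset D)) /=.
rewrite [X in _ = _ + X]big1 ?addr0 => [|X XD]; last first.
  have [i /[!inE] /andP[iD iX]] : exists i, i \in X :\: D.
    by apply/set0Pn; rewrite setD_eq0.
  by rewrite (bigD1 i) //= iX (negbTE iD) mul0r.
apply: eq_bigr => X XD.
rewrite (bigID (mem X)) /=; congr (_ * _).
  by rewrite (eq_bigr (fun=> p)) ?prodr_const // => i iX; rewrite iX (subsetP XD).
rewrite -prodr_const [LHS]big_mkcond [RHS]big_mkcond; apply: eq_bigr => i _.
by rewrite !inE; case: (i \in X); case: (i \in D).
Qed.

Lemma sum_interval_weight (R : comNzRingType) (T : finType) (p q : R) (N : nat)
    (F U : {set T}) : F \subset U -> (#|U| <= N)%N ->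
  \sum_(E : {set T} | (F \subset E) && (E \subset U)) p ^+ #|E| * q ^+ (N - #|E|)
  = p ^+ #|F| * q ^+ (N - #|U|) * (p + q) ^+ #|U :\: F|.
Proof.
move=> FU UN.
rewrite (reindex_onto (fun X => F :|: X) (fun E => E :\: F)) /=; last first.
  by move=> E /andP[FE _]; rewrite setDE setUIr setUCr setIT; apply/setUidPr.
rewrite (eq_bigl (fun X : {set T} => X \subset U :\: F)) => [|X]; last first.
  rewrite subsetUl subUset FU subsetD setDUl setDv set0U /=.
  by rewrite (sameP eqP setDidPl).
rewrite -sum_subsets big_distrr /=; apply: eq_bigr => X XUF.
move: (XUF); rewrite subsetD => /andP[XU dXF].
have cFX : #|F :|: X| = (#|F| + #|X|)%N.
  by rewrite cardsU disjoint_sym in dXF *; rewrite (disjoint_setI0 dXF) cards0 subn0.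
have : (#|F :|: X| <= #|U|)%N by rewrite subset_leq_card // subUset FU.
rewrite cFX (cardsDS XUF) (cardsDS FU) => FXU.
have -> : (N - (#|F| + #|X|) = (N - #|U|) + (#|U| - #|F| - #|X|))%N by lia.
by rewrite !exprD mulrACA.
Qed.

Lemma ge1_expr_powRN (R : realType) (q x : R) (k : nat) :
  0 < q <= 1 -> k%:R <= x -> 1 <= q ^+ k * q `^ (- x).
Proof.
move=> /andP[q0 q1] kx; have qk0 : q ^+ k != 0 by rewrite expf_neq0 // gt_eqF.
rewrite -(mulfV qk0); apply: ler_wpM2l; first exact/exprn_ge0/ltW.
by rewrite -(powR_invn k (ltW q0)); apply: ger_powR; rewrite ?q0 // lerN2.
Qed.

Lemma spanning_forest_fiber_le (R : realType) (p : R) (n r : nat)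
    (F : {set {set 'I_n}}) :
  0 <= p -> p < 1 ->
  \sum_(E | (is_graph E && `[< event_B r E >]) && (spanning_forest E == F))
      p ^+ #|E| * (1 - p) ^+ (#|pairs n| - #|E|)
  <= p ^+ #|F| * (1 - p) ^+ (#|pairs n| - #|F|) * (1 - p) `^ (- ((r * n)%:R / 2)).
Proof.
move=> p0 p1; set q := 1 - p; have q0 : 0 < q by rewrite subr_gt0.
have w0 m k : 0 <= p ^+ m * q ^+ k by rewrite mulr_ge0 ?exprn_ge0 // ltW.
case: (pickP [pred E | (is_graph E && `[< event_B r E >]) && (spanning_forest E == F)])
  => [E0 | fiber0]; last first.
  by rewrite big_pred0 // mulr_ge0 ?powR_ge0 ?w0.
move=> /andP[/andP[gE0 /asboolP BE0] /eqP <-] {F}.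
set F := spanning_forest E0; set U := component_pairs F.
have BF : event_B r F by move=> v; rewrite component_spanning_forest.
have FU : F \subset U by apply/graph_sub_component_pairs/is_graph_spanning_forest.
have UN : (#|U| <= #|pairs n|)%N by apply/subset_leq_card/component_pairs_sub.
apply: (@le_trans _ _ (\sum_(E : {set {set 'I_n}} | (F \subset E) && (E \subset U))
                         p ^+ #|E| * q ^+ (#|pairs n| - #|E|))).
  rewrite [X in X <= _]big_mkcond [X in _ <= X]big_mkcond /=.
  apply: ler_sum => E _; case: ifP => [/andP[gE /eqP sfE]|_]; last by case: ifP => // _; apply: w0.
  have [FE sE _] := spanning_forestP E; rewrite sfE in FE sE.
  have EU : E \subset U.
    by rewrite /U (component_pairs_same sE) graph_sub_component_pairs //; case/andP: gE.
  by rewrite FE EU.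
rewrite sum_interval_weight // subrKC expr1n mulr1 -mulrA ler_wpM2l ?exprn_ge0 //.
have -> : (#|pairs n| - #|F| = #|pairs n| - #|U| + #|U :\: F|)%N.
  by rewrite (cardsDS FU); move: (subset_leq_card FU) UN; lia.
rewrite exprD -mulrA -{1}[q ^+ _]mulr1 ler_wpM2l ?exprn_ge0 ?(ltW q0) //.
apply: ge1_expr_powRN; first by rewrite q0 lerBlDr lerDl.
rewrite ler_pdivlMr // -natrM ler_nat.
move: (card_component_pairs BF) (subset_leq_card (subsetDl U F)); rewrite -/U.
lia.
Qed.

Theorem lemma5p1 (R : realType) (alpha : R) (n r : nat)
  (halpha : 0 <= alpha) (hn : alpha < n%:R) (hr : (1 <= r)%N) :
  Pgnp n (alpha / n%:R) (event_B r)
  <= Pgnp n (alpha / n%:R) (@event_L n)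
     * (1 - alpha / n%:R) `^ (- ((r * n)%:R / 2)).
Proof.
have n0 : 0 < n%:R :> R := le_lt_trans halpha hn.
have p0 : 0 <= alpha / n%:R by rewrite divr_ge0 // ltW.
have p1 : alpha / n%:R < 1 by rewrite ltr_pdivrMr // mul1r.
rewrite /Pgnp.
rewrite (partition_big (@spanning_forest n) (fun F => is_graph F && `[< event_L F >])).
  by rewrite big_distrl; apply: ler_sum => F _; apply: spanning_forest_fiber_le.
move=> E /andP[gE _]; rewrite is_graph_spanning_forest //=.
exact/asboolT/spanning_forest_acyclic.
Qed.
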